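(* Let $A,B\in\widehat{\mathbb F_q^\times}$ be such that each of $A$, $B$, $AB$, $A\overline B$ has order larger than $2$. Then for all $z\in\mathbb F_q$, $${}_2\mathbb F_1\!\left[\begin{matrix}A&A\phi\\&A^2\end{matrix};z\right]{}_2\mathbb F_1\!\left[\begin{matrix}B&B\phi\\&B^2\end{matrix};z\right]={}_2\mathbb F_1\!\left[\begin{matrix}AB&AB\phi\\&(AB)^2\end{matrix};z\right]+\overline B^2\!\left(\tfrac z4\right){}_2\mathbb F_1\!\left[\begin{matrix}A\overline B&A\overline B\phi\\&(A\overline B)^2\end{matrix};z\right]-\delta(1-z)AB(4),$$ $${}_2\mathbb F_1\!\left[\begin{matrix}A&A\phi\\&\phi\end{matrix};z\right]{}_2\mathbb F_1\!\left[\begin{matrix}B&B\phi\\&\phi\end{matrix};z\right]={}_2\mathbb F_1\!\left[\begin{matrix}AB&AB\phi\\&\phi\end{matrix};z\right]+\overline B^2(1-z)\,{}_2\mathbb F_1\!\left[\begin{matrix}A\overline B&A\overline B\phi\\&\phi\end{matrix};z\right]-\delta(z).$$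
   Context: $\mathbb F_q$ is a finite field with $q$ elements, $q$ a power of an odd prime $p$. $\widehat{\mathbb F_q^\times}$ is the group of multiplicative characters $\chi:\mathbb F_q^\times\to\mathbb C^\times$; every character, including the trivial character $\varepsilon$, is extended to $\mathbb F_q$ by $\chi(0)=0$. $\phi$ is the quadratic character, $\overline\chi$ denotes the complex-conjugate (inverse) character, and products/powers of characters are pointwise. For $x\in\mathbb F_q$, $\delta(x)=1$ if $x=0$ and $0$ otherwise. Jacobi sum: $J(A,B)=\sum_{x\in\mathbb F_q}A(x)B(1-x)$. Period function: ${}_2\mathbb P_1\!\left[\begin{matrix}A&B\\&C\end{matrix};\lambda\right]=\sum_{y\in\mathbb F_q}B(y)\,\overline BC(1-y)\,\overline A(1-\lambda y)$; normalized function ${}_2\mathbb F_1\!\left[\begin{matrix}A&B\\&C\end{matrix};\lambda\right]=\frac{1}{J(B,C\overline B)}\,{}_2\mathbb P_1\!\left[\begin{matrix}A&B\\&C\end{matrix};\lambda\right]$. *)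

From HB Require Import structures.
From mathcomp Require Import all_boot all_order all_algebra all_field.
Set Implicit Arguments. Unset Strict Implicit. Unset Printing Implicit Defensive.
Import Order.TTheory GRing.Theory Num.Theory.
Local Open Scope ring_scope.

Section FFChars.
Variable F : finFieldType.

(* A multiplicative character chi : F^x -> C^x, extended by chi(0) = 0. *)
Definition is_mchar (chi : F -> algC) : Prop :=
  [/\ chi 0 = 0,
      forall x : F, x != 0 -> chi x != 0
    & forall x y : F, x != 0 -> y != 0 -> chi (x * y) = chi x * chi y].

(* pointwise product, conjugate (= inverse) character, powers *)
Definition cmul (A B : F -> algC) : F -> algC := fun x => A x * B x.
Definition cbar (A : F -> algC) : F -> algC := fun x => (A x)^-1.
Definition cexp (A : F -> algC) (n : nat) : F -> algC := fun x => A x ^+ n.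

Definition char_order (chi : F -> algC) : nat :=
  (find (fun n => [forall x : F, (x != 0) ==> (chi x ^+ n.+1 == 1)])
        (iota 0 #|F|)).+1.

Definition qchar : F -> algC := fun x =>
  if x == 0 then 0 else if [exists y : F, y ^+ 2 == x] then 1 else -1.

Definition kdelta (x : F) : algC := if x == 0 then 1 else 0.

Definition Jacobi (A B : F -> algC) : algC := \sum_(x : F) A x * B (1 - x).

Definition P21 (A B C : F -> algC) (lam : F) : algC :=
  \sum_(y : F) B y * cmul (cbar B) C (1 - y) * cbar A (1 - lam * y).

Definition F21 (A B C : F -> algC) (lam : F) : algC :=
  P21 A B C lam / Jacobi B (cmul C (cbar B)).

End FFChars.

From HB Require Import structures.
From mathcomp Require Import all_boot all_order all_algebra all_field.
From mathcomp Require Import all_fingroup all_solvable.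
From mathcomp Require Import ring.

Set Implicit Arguments.
Unset Strict Implicit.
Unset Printing Implicit Defensive.
Import Order.TTheory GRing.Theory Num.Theory FinRing.Theory.
Local Open Scope ring_scope.

(* After [y = 1/w], the period [P21 X (X phi) phi z] becomes the "hyperbola sum"
   [sum_w phi(w) Xb(w + z/w - 1 - z)].  The map [w |-> z/w] shows that it vanishes when
   [z] is a nonsquare; for [z = s^2], grouping the [w] by [t = w + s^2/w], each fibre
   having [1 + phi(t^2 - 4 s^2)] points, turns it into
   [(Xb((1+s)^2) + Xb((1-s)^2)) J], where [J] is the (nonzero, of norm [q]) Jacobi sum
   normalising [F21].  So [F21 X (X phi) phi (s^2) = Xb((1+s)^2) + Xb((1-s)^2)], and the
   second identity is the expansion of a product of two such binomials.  The first
   one follows from the reflection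
   [F21 X (X phi) X^2 z = X(4) F21 X (X phi) phi (1 - z)], obtained by [y |-> y/(y-1)]. *)

Lemma odd_card_two_neq0 (F : finFieldType) : odd #|F| -> (2%:R : F) != 0.
Proof.
move=> oddF; apply: contraTneq oddF => two0.
have order1 : #[GRing.one F]%g = 2%N.
  apply/prime_nt_dvdP => //; last by rewrite order_dvdn zmodXgE two0.
  by rewrite order_eq1 oner_neq0.
apply/negP; rewrite -cardsT => /(dvdn_odd (order_dvdG (in_setT (GRing.one F)))).
by rewrite order1.
Qed.

Lemma four_neq0 (K : fieldType) : (2%:R : K) != 0 -> (4%:R : K) != 0.
Proof. by move=> two_neq0; rewrite (_ : 4%:R = 2%:R * 2%:R) ?mulf_neq0 //; ring. Qed.

Lemma char_order_gt2_sqr_neq1 (F : finFieldType) (X : F -> algC) :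
  (2 < char_order X)%N -> exists2 a, a != 0 & X a ^+ 2 != 1.
Proof.
move=> ogt2; apply/exists_inP; apply: contraLR ogt2.
rewrite negb_exists_in => /forall_inP X2.
rewrite /char_order.
have -> : #|F| = (#|F| - 2).+2 by rewrite -addn2 subnK ?finNzRing_gt1.
rewrite /=; case: ifP => //; case: ifP => // /negP[].
by apply/forall_inP => x /X2 /negPn.
Qed.

Lemma sum_indicator_eq (T : finType) (a : T) : \sum_u (((u == a)%:R) : algC) = 1.
Proof. by rewrite (bigD1 a) //= eqxx big1 ?addr0 // => u /negbTE ->. Qed.

Lemma sum_comp_fiber (T U : finType) (P : pred T) (f : T -> U) (H : U -> algC) :
  \sum_(x | P x) H (f x) = \sum_u H u * \sum_x ((P x && (f x == u))%:R).
Proof.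
rewrite (eq_bigr (fun u => \sum_x (P x && (f x == u))%:R * H u)); last first.
  by move=> u _; rewrite mulr_sumr; apply: eq_bigr => x _; rewrite mulrC.
rewrite exchange_big big_mkcond /=; apply: eq_bigr => x _.
rewrite (bigD1 (f x)) //= eqxx andbT big1 ?addr0; last first.
  by move=> u /negbTE fxu; rewrite eq_sym fxu andbF mul0r.
by case: (P x); rewrite ?mul1r ?mul0r.
Qed.

Lemma sum_affine (F : finFieldType) (G : F -> algC) c a :
  c != 0 -> \sum_u G (c * u + a) = \sum_u G u.
Proof.
move=> cn0; rewrite [RHS](reindex_inj (h := fun u => c * u + a)) //.
by move=> u v /= /addIr /(mulfI cn0).
Qed.

Section TotallyMultiplicative.
Variable F : finFieldType.

(* [is_mchar] only asks for multiplicativity on [F^x]; extending it to all of [F]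
   makes every rewriting step unconditional. *)
Definition mchar (X : F -> algC) :=
  [/\ X 0 = 0, X 1 = 1 & {morph X : x y / x * y}].

Lemma is_mcharP X : is_mchar X -> mchar X.
Proof.
case=> X0 Xn0 XM.
have X1 : X 1 = 1.
  have X11 : X 1 * (X 1 - 1) = 0.
    by rewrite mulrBr mulr1 -XM ?oner_neq0 // mulr1 subrr.
  by move/eqP: X11; rewrite mulf_eq0 subr_eq0 (negbTE (Xn0 _ (oner_neq0 _))) => /eqP.
split=> // x y.
have [->|xn0] := eqVneq x 0; first by rewrite mul0r X0 mul0r.
have [->|yn0] := eqVneq y 0; first by rewrite mulr0 X0 mulr0.
exact: XM.
Qed.

Section Laws.
Variable X : F -> algC.
Hypothesis hX : mchar X.

Lemma mchar0 : X 0 = 0. Proof. by case: hX. Qed.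
Lemma mchar1 : X 1 = 1. Proof. by case: hX. Qed.
Lemma mcharM x y : X (x * y) = X x * X y. Proof. by case: hX. Qed.

Lemma mchar_neq0 x : x != 0 -> X x != 0.
Proof.
move=> xn0; apply/eqP => X0.
by have := mcharM x x^-1; rewrite mulfV // mchar1 X0 mul0r => /eqP; rewrite oner_eq0.
Qed.

Lemma mcharV x : X x^-1 = (X x)^-1.
Proof.
have [->|xn0] := eqVneq x 0; first by rewrite invr0 mchar0 invr0.
apply: (mulfI (mchar_neq0 xn0)).
by rewrite -mcharM !mulfV ?mchar1 ?mchar_neq0.
Qed.

Lemma mcharX x n : X (x ^+ n) = X x ^+ n.
Proof. by elim: n => [|n IH]; rewrite ?mchar1 // !exprS mcharM IH. Qed.

Lemma mcharN1_sqr : X (-1) ^+ 2 = 1.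
Proof. by rewrite -mcharX sqrrN expr1n mchar1. Qed.

Lemma mchar_sum_eq0 a : a != 0 -> X a != 1 -> \sum_x X x = 0.
Proof.
move=> an0 Xa1.
have sum_fixed : \sum_x X x = X a * \sum_x X x.
  rewrite mulr_sumr (reindex_inj (mulfI an0)) /=.
  by apply: eq_bigr => x _; rewrite mcharM.
apply/eqP; move/eqP: sum_fixed.
rewrite -subr_eq0 -{1}[\sum_x X x]mul1r -mulrBl mulf_eq0 subr_eq0 eq_sym.
by rewrite (negbTE Xa1).
Qed.

End Laws.

Lemma mchar_cmul X Y : mchar X -> mchar Y -> mchar (cmul X Y).
Proof.
move=> hX hY; split; rewrite /cmul ?mchar0 ?mchar1 ?mul0r ?mulr1 //.
by move=> x y; rewrite !mcharM // mulrACA.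
Qed.

Lemma mchar_cbar X : mchar X -> mchar (cbar X).
Proof.
move=> hX; split; rewrite /cbar ?mchar0 ?mchar1 ?invr0 ?invr1 //.
by move=> x y; rewrite mcharM // invfM.
Qed.

End TotallyMultiplicative.

Section QuadraticCharacter.
Variable F : finFieldType.
Hypothesis two_neq0 : (2%:R : F) != 0.
Local Notation phi := (@qchar F).

Definition is_square (x : F) := [exists y, y ^+ 2 == x].

Lemma qchar0 : phi 0 = 0. Proof. by rewrite /qchar eqxx. Qed.

Lemma qchar_square x : x != 0 -> is_square x -> phi x = 1.
Proof. by rewrite /qchar /is_square => /negbTE -> ->. Qed.

Lemma qchar_nonsquare x : x != 0 -> ~~ is_square x -> phi x = -1.
Proof. by rewrite /qchar /is_square => /negbTE -> /negbTE ->. Qed.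

Lemma qchar_sqr a : a != 0 -> phi (a ^+ 2) = 1.
Proof.
by move=> an0; rewrite qchar_square ?expf_neq0 //; apply/existsP; exists a.
Qed.

Lemma qchar_pm1 x : x != 0 -> phi x = 1 \/ phi x = -1.
Proof. by move=> xn0; rewrite /qchar (negbTE xn0); case: existsP; [left | right]. Qed.

Lemma qchar_le1 x : phi x <= 1.
Proof.
rewrite /qchar; case: (x == 0) => //; case: existsP => _ //.
exact: le_trans (lerN10 _) ler01.
Qed.

Lemma sum_sqr_eq d : \sum_u (((u ^+ 2 == d)%:R) : algC) = 1 + phi d.
Proof.
have [->|dn0] := eqVneq d 0.
  rewrite qchar0 addr0 -[RHS](sum_indicator_eq (0 : F)).
  by apply: eq_bigr => u _; rewrite expf_eq0.
rewrite /qchar (negbTE dn0); case: existsP => [[a /eqP ea]|nonsq].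
  have an0 : a != 0 by apply: contraNneq dn0 => a0; rewrite -ea a0 expr0n.
  rewrite -ea.
  have a_neq_opp : a != - a.
    apply: contraNneq (mulf_neq0 an0 two_neq0) => a_opp.
    by rewrite mulr_natr mulr2n {1}a_opp addNr.
  rewrite (eq_bigr (fun u => ((u == a)%:R + (u == - a)%:R : algC))).
    by rewrite big_split /= !sum_indicator_eq.
  move=> u _; rewrite eqf_sqr.
  have [->|ua] := eqVneq u a; first by rewrite (negbTE a_neq_opp) addr0.
  by rewrite add0r.
rewrite subrr big1 // => u _.
by case: eqP => // ud; case: nonsq; exists u; rewrite ud.
Qed.

Lemma qchar_sum : \sum_d phi d = 0.
Proof.
have count_pairs : \sum_(d : F) \sum_(u : F) (((u ^+ 2 == d)%:R) : algC) = #|F|%:R.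
  rewrite exchange_big /= (eq_bigr (fun _ => 1)) ?sumr_const ?cardT -?cardE //.
  move=> u _; rewrite -[RHS](sum_indicator_eq (u ^+ 2)).
  by apply: eq_bigr => d _; rewrite eq_sym.
move: count_pairs; rewrite (eq_bigr _ (fun d _ => sum_sqr_eq d)) big_split /=.
by rewrite sumr_const cardT -cardE => /eqP; rewrite -subr_eq0 addrC addrK => /eqP.
Qed.

Lemma qchar_mul_sqr a b : a != 0 -> phi (a ^+ 2 * b) = phi b.
Proof.
move=> an0; rewrite /qchar mulf_eq0 expf_eq0 /= (negbTE an0) /=.
case: (b == 0) => //.
case: existsP => [[y /eqP ey]|nb]; case: existsP => [[y' /eqP ey']|na] //.
  by case: na; exists (y / a); rewrite expr_div_n ey mulrAC divff ?mul1r // expf_neq0.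
by case: nb; exists (a * y'); rewrite exprMn ey'.
Qed.

(* The defect [-(phi (a d) + phi d)] is pointwise nonnegative and sums to zero. *)
Lemma qchar_mul_nonsquare a d : a != 0 -> ~~ is_square a -> phi (a * d) = - phi d.
Proof.
move=> an0 nsq_a.
pose defect d := - (phi (a * d) + phi d).
have defect_ge0 d' : 0 <= defect d'.
  rewrite /defect oppr_ge0.
  have [->|dn0] := eqVneq d' 0; first by rewrite mulr0 qchar0 addr0.
  case: (boolP (is_square d')) => [/existsP[c /eqP ec]|nsq_d]; last first.
    by rewrite (qchar_nonsquare dn0 nsq_d) subr_le0 qchar_le1.
  have cn0 : c != 0 by apply: contraNneq dn0 => c0; rewrite -ec c0 expr0n.
  rewrite -ec qchar_sqr // qchar_nonsquare ?addNr ?mulf_neq0 ?expf_neq0 //.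
  apply: contra nsq_a => /existsP[y /eqP ey]; apply/existsP; exists (y / c).
  by rewrite expr_div_n ey mulfK // expf_neq0.
have defect_sum : \sum_d' defect d' = 0.
  have scaled : \sum_i phi (a * i) = \sum_i phi i by rewrite [RHS](reindex_inj (mulfI an0)).
  by rewrite /defect sumrN big_split /= scaled qchar_sum addr0 oppr0.
have /eqP := @psumr_eq0P _ _ xpredT defect (fun d' _ => defect_ge0 d') defect_sum d isT.
by rewrite /defect oppr_eq0 addr_eq0 => /eqP.
Qed.

Lemma qcharM x y : phi (x * y) = phi x * phi y.
Proof.
have [->|xn0] := eqVneq x 0; first by rewrite mul0r qchar0 mul0r.
case: (boolP (is_square x)) => [/existsP[c /eqP ec]|nsq_x].
  have cn0 : c != 0 by apply: contraNneq xn0 => c0; rewrite -ec c0 expr0n.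
  by rewrite -ec qchar_mul_sqr // qchar_sqr // mul1r.
by rewrite qchar_mul_nonsquare // (qchar_nonsquare xn0 nsq_x) mulN1r.
Qed.

Lemma mchar_qchar : mchar phi.
Proof. by split; [exact: qchar0 | rewrite -(expr1n _ 2) qchar_sqr ?oner_neq0 | exact: qcharM]. Qed.

Lemma qcharV x : phi x^-1 = phi x.
Proof.
rewrite (mcharV mchar_qchar); have [->|xn0] := eqVneq x 0; first by rewrite qchar0 invr0.
by case: (qchar_pm1 xn0) => ->; rewrite ?invrN invr1.
Qed.

End QuadraticCharacter.

Section JacobiNorm.
Variable F : finFieldType.
Variables chi psi : F -> algC.
Hypotheses (hchi : mchar chi) (hpsi : mchar psi).

(* [y = 1 - u^-1] turns [(1 - a y) / (1 - y)] into [(1 - a) u + a]; the term [u = 0]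
   of the right-hand side has no counterpart, while [y = 1] contributes [psi 0 = 0]. *)
Lemma sum_mchar_cross_ratio a :
  \sum_y psi ((1 - a * y) / (1 - y)) = \sum_u psi ((1 - a) * u + a) - psi a.
Proof.
have inj : injective (fun u : F => 1 - u^-1) by move=> u v /addrI /oppr_inj /invr_inj.
rewrite [in RHS](bigD1 0) //= mulr0 add0r addrAC subrr add0r.
rewrite (reindex_inj inj) /= (bigD1 0) //= invr0 subr0 subrr invr0 mulr0 mchar0 // add0r.
apply: eq_bigr => u un0; congr psi; field.
by rewrite un0 opprB addrC subrK oner_neq0.
Qed.

Lemma Jacobi_mul_cbar :
  \sum_x chi x = 0 -> \sum_x psi x = 0 -> \sum_x cmul chi psi x = 0 ->
  Jacobi chi psi * Jacobi (cbar chi) (cbar psi) = #|F|%:R.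
Proof.
move=> sum_chi sum_psi sum_chipsi.
have inner y : y != 0 ->
    \sum_x chi x * psi (1 - x) * (cbar chi y * cbar psi (1 - y))
    = \sum_a chi a * psi ((1 - a * y) / (1 - y)).
  move=> yn0; rewrite (reindex_inj (mulIf yn0)); apply: eq_bigr => a _.
  rewrite /cbar !mcharM // (mcharV hpsi).
  have chiy := mchar_neq0 hchi yn0; move: (psi (1 - y))^-1 => w.
  by field.
have inner_sum a : \sum_(y | y != 0) psi ((1 - a * y) / (1 - y))
    = \sum_u psi ((1 - a) * u + a) - psi a - 1.
  have := sum_mchar_cross_ratio a.
  rewrite (bigD1 0) //= mulr0 !subr0 invr1 mulr1 (mchar1 hpsi) => <-.
  by rewrite addrC addrK.
rewrite /Jacobi mulr_suml.
under eq_bigr do rewrite mulr_sumr.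
rewrite exchange_big (bigD1 0) //= big1 ?add0r; last first.
  by move=> x _; rewrite /cbar mchar0 // invr0 !mul0r mulr0.
rewrite (eq_bigr _ (fun y yn0 => inner y yn0)) exchange_big /=.
under eq_bigr do rewrite -mulr_sumr inner_sum.
have -> : \sum_a chi a * (\sum_u psi ((1 - a) * u + a) - psi a - 1)
    = \sum_a chi a * \sum_u psi ((1 - a) * u + a) - \sum_a cmul chi psi a - \sum_a chi a.
  by rewrite -!sumrB; apply: eq_bigr => a _; rewrite /cmul; ring.
rewrite sum_chipsi sum_chi !subr0 (bigD1 1) //= [X in _ + X]big1 ?addr0.
  rewrite (mchar1 hchi) mul1r (eq_bigr (fun _ => 1)) ?sumr_const ?cardT -?cardE //.
  by move=> u _; rewrite subrr mul0r add0r (mchar1 hpsi).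
move=> a a1; rewrite sum_affine ?sum_psi ?mulr0 //.
by rewrite subr_eq0 eq_sym.
Qed.

End JacobiNorm.

Section HyperbolaSums.
Variable F : finFieldType.
Hypothesis two_neq0 : (2%:R : F) != 0.
Local Notation phi := (@qchar F).

Lemma sum_qchar_hyperbola_nonsquare (G : F -> algC) z : z != 0 -> ~~ is_square z ->
  \sum_w phi w * G (w + z * w^-1) = 0.
Proof.
move=> zn0 nsq_z; set S := \sum_w _.
have S_opp : S = - S.
  rewrite {1}/S (reindex_inj (h := fun w => z * w^-1)); last first.
    by move=> u v /= /(mulfI zn0) /invr_inj.
  rewrite /S -sumrN; apply: eq_bigr => w _.
  by rewrite qchar_mul_nonsquare // (qcharV two_neq0) invfM invrK mulrA mulfV // mul1r addrC mulNr.
have : S *+ 2 == 0 by rewrite mulr2n {1}S_opp addNr.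
by rewrite mulrn_eq0 /= => /eqP.
Qed.

Section Square.
Variable s : F.
Hypothesis sn0 : s != 0.
Local Notation T w := (w + s ^+ 2 * w^-1).

(* Completing the square: [w + s^2/w = t] iff [(w - t/2)^2 = (t^2 - 4 s^2)/4]. *)
Lemma count_hyperbola t :
  \sum_w (((w != 0) && (T w == t))%:R : algC) = 1 + phi (t ^+ 2 - 4%:R * s ^+ 2).
Proof.
pose h : F := 2%:R^-1; pose D := t ^+ 2 - 4%:R * s ^+ 2.
have shifted w : ((w != 0) && (T w == t)) = ((w - t * h) ^+ 2 == D * h ^+ 2).
  have -> : (w - t * h) ^+ 2 == D * h ^+ 2 = (w ^+ 2 - t * w + s ^+ 2 == 0).
    by rewrite -subr_eq0; congr (_ == 0); rewrite /h /D; field.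
  have [->|wn0] := eqVneq w 0.
    by rewrite /= expr0n mulr0 subrr add0r expf_eq0 (negbTE sn0) andbF.
  have -> : w ^+ 2 - t * w + s ^+ 2 = (T w - t) * w by field.
  by rewrite /= mulf_eq0 (negbTE wn0) orbF subr_eq0.
under eq_bigr do rewrite shifted.
rewrite (reindex_inj (h := fun w => w + t * h)) /=; last by move=> u v /addIr.
under eq_bigr do rewrite addrK.
by rewrite sum_sqr_eq // mulrC qchar_mul_sqr // invr_eq0.
Qed.

(* [phi w = phi (T w + 2 s)] since [T w + 2 s = (w + s)^2 / w]; the fibres of [T] are
   then counted by [count_hyperbola]. The point [w = -s] needs separate care. *)
Lemma sum_qchar_hyperbola_square (G : F -> algC) :
  \sum_w phi w * G (T w) = \sum_t (phi (t + 2%:R * s) + phi (t - 2%:R * s)) * G t.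
Proof.
pose H t := phi (t + 2%:R * s) * G t.
have T_opp : T (- s) = - (2%:R * s) by field; rewrite oppr_eq0.
have qchar_T w : w != - s -> phi w * G (T w) = (w != 0)%:R * H (T w).
  move=> ws; have [->|wn0] := eqVneq w 0; first by rewrite qchar0 !mul0r.
  rewrite mul1r /H; congr (_ * _).
  have wsn0 : w + s != 0 by rewrite -(subr_eq0 w (-s)) opprK in ws *.
  have -> : T w + 2%:R * s = (w + s) ^+ 2 * w^-1 by field.
  by rewrite qchar_mul_sqr // qcharV.
have split_opp : \sum_w phi w * G (T w)
    = phi (- s) * G (- (2%:R * s)) + \sum_(w | w != 0) H (T w).
  rewrite (bigD1 (- s)) //= T_opp; congr (_ + _).
  rewrite [RHS]big_mkcond [RHS](bigD1 (- s)) //= T_opp /H addNr qchar0 mul0r if_same add0r.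
  by apply: eq_bigr => w ws; rewrite qchar_T //; case: (w != 0); rewrite ?mul1r ?mul0r.
rewrite split_opp sum_comp_fiber.
under eq_bigr do rewrite count_hyperbola.
rewrite (bigD1 (- (2%:R * s))) //= [in RHS](bigD1 (- (2%:R * s))) //= /H addNr qchar0 !mul0r.
have -> : - (2%:R * s) - 2%:R * s = 2%:R ^+ 2 * (- s) by ring.
rewrite qchar_mul_sqr // !add0r; congr (_ + _); apply: eq_bigr => t t_opp.
have tn0 : t + 2%:R * s != 0 by rewrite -(subr_eq0 t (- (2%:R * s))) opprK in t_opp.
have -> : t ^+ 2 - 4%:R * s ^+ 2 = (t + 2%:R * s) * (t - 2%:R * s) by ring.
by rewrite qcharM //; case: (qchar_pm1 tn0) => ->; ring.
Qed.

End Square.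
End HyperbolaSums.

Lemma moebius_involutive (K : fieldType) :
  involutive (fun y : K => if y == 1 then 1 else y / (y - 1)).
Proof.
move=> y; have [->|y1] := eqVneq y 1; first by rewrite eqxx.
have y1n0 : y - 1 != 0 by rewrite subr_eq0.
have -> : y / (y - 1) - 1 = (y - 1)^-1 by field.
have -> : y / (y - 1) == 1 = false.
  by apply/negbTE; rewrite -subr_eq0 (_ : _ - 1 = (y - 1)^-1) ?invr_eq0 //; field.
by rewrite invrK mulfVK.
Qed.

Section QuadraticPeriod.
Variable F : finFieldType.
Hypothesis two_neq0 : (2%:R : F) != 0.
Local Notation phi := (@qchar F).

Definition F21q (X : F -> algC) : F -> algC := F21 X (cmul X phi) phi.

Variable X : F -> algC.
Hypotheses (hX : mchar X) (oX : (2 < char_order X)%N).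
Local Notation Xb := (cbar X).
Local Notation J := (Jacobi (cmul X phi) (cbar X)).

Let hphi := mchar_qchar two_neq0.

Lemma P21_qchar_hyperbola z :
  P21 X (cmul X phi) phi z = \sum_w phi w * Xb (w + z * w^-1 - 1 - z).
Proof.
rewrite /P21 (reindex_inj invr_inj); apply: eq_bigr => w _; rewrite /cmul /cbar.
have [->|wn0] := eqVneq w 0; first by rewrite invr0 mchar0 // qchar0 !mul0r.
have [->|wn1] := eqVneq w 1.
  rewrite invr1 subrr mchar0 // qchar0 !mulr0 mul0r.
  have -> : 1 + z * 1 - 1 - z = 0 by ring.
  by rewrite mchar0 // invr0 mulr0.
have w1n0 : w - 1 != 0 by rewrite subr_eq0.
have -> : 1 - w^-1 = (w - 1) * w^-1 by field.
have -> : 1 - z * w^-1 = (w - z) * w^-1 by field.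
have -> : w + z * w^-1 - 1 - z = (w - 1) * (w - z) * w^-1 by field.
rewrite !(mcharM hX, mcharV hX, mcharM hphi, mcharV hphi) !invfM !invrK.
have Xw := mchar_neq0 hX wn0; have Xw1 := mchar_neq0 hX w1n0.
move: (X (w - z))^-1 => Xwz.
by case: (qchar_pm1 wn0) => ->; case: (qchar_pm1 w1n0) => ->; field;
  rewrite ?Xw ?Xw1 ?oppr_eq0 ?oner_eq0.
Qed.

Lemma sum_cbar_eq0 : \sum_x Xb x = 0.
Proof.
have [a an0 Xa2] := char_order_gt2_sqr_neq1 oX.
apply: (mchar_sum_eq0 (mchar_cbar hX) an0); rewrite /cbar.
by apply: contraNneq Xa2 => /(congr1 GRing.inv); rewrite invrK invr1 => ->; rewrite expr1n.
Qed.

Lemma sum_cmul_qchar_eq0 : \sum_x cmul X phi x = 0.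
Proof.
have [a an0 Xa2] := char_order_gt2_sqr_neq1 oX.
apply: (mchar_sum_eq0 (mchar_cmul hX hphi) an0); rewrite /cmul.
apply: contraNneq Xa2; case: (qchar_pm1 an0) => -> Xa1.
  by rewrite mulr1 in Xa1; rewrite Xa1 expr1n.
by rewrite mulrN1 in Xa1; rewrite -[X a]opprK Xa1 sqrrN expr1n.
Qed.

Lemma sum_qchar_cbar_eq0 : \sum_x cmul phi Xb x = 0.
Proof.
have [a an0 Xa2] := char_order_gt2_sqr_neq1 oX.
apply: (mchar_sum_eq0 (mchar_cmul hphi (mchar_cbar hX)) an0); rewrite /cmul /cbar.
apply: contraNneq Xa2 => phiXa.
have -> : X a = phi a by rewrite -[X a]mul1r -phiXa mulfVK // mchar_neq0.
by case: (qchar_pm1 an0) => ->; rewrite ?sqrrN expr1n.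
Qed.

Lemma Jacobi_qchar_denominator :
  Jacobi (cmul X phi) (cmul phi (cbar (cmul X phi))) = J.
Proof.
apply: eq_bigr => y _; congr (_ * _); rewrite /cmul /cbar.
have [->|yn0] := eqVneq (1 - y) 0; first by rewrite qchar0 mchar0 // !mul0r invr0.
rewrite invfM mulrC -mulrA mulVf ?mulr1 //.
by case: (qchar_pm1 yn0) => ->; rewrite ?oppr_eq0 oner_eq0.
Qed.

Lemma Jacobi_cmul_qchar_neq0 : J != 0.
Proof.
have sum_phi : \sum_x cmul (cmul X phi) Xb x = 0.
  rewrite -[RHS](qchar_sum two_neq0); apply: eq_bigr => x _; rewrite /cmul /cbar.
  have [->|xn0] := eqVneq x 0; first by rewrite qchar0 mulr0 mul0r.
  by rewrite mulrAC mulfV ?mul1r // mchar_neq0.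
have norm := Jacobi_mul_cbar (mchar_cmul hX hphi) (mchar_cbar hX)
  sum_cmul_qchar_eq0 sum_cbar_eq0 sum_phi.
apply/eqP => J0; move/eqP: norm; rewrite J0 mul0r eq_sym pnatr_eq0.
by case: #|F| (finNzRing_gt1 F).
Qed.

Lemma P21_qchar0 : P21 X (cmul X phi) phi 0 = J.
Proof.
rewrite -Jacobi_qchar_denominator; apply: eq_bigr => y _.
by rewrite mul0r subr0 /cbar mchar1 // invr1 mulr1 /cmul [phi (1 - y) * _]mulrC.
Qed.

Lemma sum_qchar_cbar_sub_sqr d : \sum_x phi x * Xb (x - d ^+ 2) = Xb (d ^+ 2) * J.
Proof.
have [->|dn0] := eqVneq d 0.
  rewrite expr0n /= /cbar mchar0 // invr0 mul0r -[RHS]sum_qchar_cbar_eq0.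
  by apply: eq_bigr => x _; rewrite subr0.
rewrite -P21_qchar0 P21_qchar_hyperbola mulr_sumr.
rewrite (reindex_inj (mulfI (expf_neq0 2 dn0))); apply: eq_bigr => y _.
rewrite qchar_mul_sqr // mulrCA; congr (_ * _).
by rewrite -(mcharM (mchar_cbar hX)); congr Xb; ring.
Qed.

Lemma P21_qchar_square s : s != 0 ->
  P21 X (cmul X phi) phi (s ^+ 2) = (Xb ((1 + s) ^+ 2) + Xb ((1 - s) ^+ 2)) * J.
Proof.
move=> sn0; rewrite P21_qchar_hyperbola.
rewrite (sum_qchar_hyperbola_square two_neq0 sn0 (fun t => Xb (t - 1 - s ^+ 2))).
under eq_bigr do rewrite mulrDl.
rewrite big_split /= [RHS]mulrDl -!sum_qchar_cbar_sub_sqr; congr (_ + _).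
  rewrite (reindex_inj (addIr (- (2%:R * s)))) /=.
  by apply: eq_bigr => x _; rewrite subrK; congr (_ * Xb _); ring.
rewrite (reindex_inj (addIr (2%:R * s))) /=.
by apply: eq_bigr => x _; rewrite addrK; congr (_ * Xb _); ring.
Qed.

Lemma P21_qchar_nonsquare z : z != 0 -> ~~ is_square z -> P21 X (cmul X phi) phi z = 0.
Proof.
move=> zn0 nsq_z; rewrite P21_qchar_hyperbola.
exact: (sum_qchar_hyperbola_nonsquare two_neq0 (fun t => Xb (t - 1 - z))).
Qed.

Lemma F21qE z : F21q X z = P21 X (cmul X phi) phi z / J.
Proof. by rewrite /F21q /F21 Jacobi_qchar_denominator. Qed.

Lemma F21q0 : F21q X 0 = 1.
Proof. by rewrite F21qE P21_qchar0 divff // Jacobi_cmul_qchar_neq0. Qed.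

Lemma F21q_square s : s != 0 -> F21q X (s ^+ 2) = Xb ((1 + s) ^+ 2) + Xb ((1 - s) ^+ 2).
Proof. by move=> sn0; rewrite F21qE P21_qchar_square // mulfK // Jacobi_cmul_qchar_neq0. Qed.

Lemma F21q_nonsquare z : z != 0 -> ~~ is_square z -> F21q X z = 0.
Proof. by move=> zn0 nsq_z; rewrite F21qE P21_qchar_nonsquare // mul0r. Qed.

Lemma P21_qchar_reflect z :
  P21 X (cmul X phi) phi (1 - z) = cmul X phi (-1) * P21 X (cmul X phi) (cexp X 2) z.
Proof.
rewrite /P21 (reindex_inj (inv_inj (@moebius_involutive F))) mulr_sumr /=.
apply: eq_bigr => y _; rewrite /cmul /cbar /cexp.
have [->|y1] := eqVneq y 1.
  by rewrite !subrr mchar0 // qchar0 expr2 !(mulr0, mul0r, invr0).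
have y1n0 : y - 1 != 0 by rewrite subr_eq0.
have -> : 1 - y / (y - 1) = (-1) * (y - 1)^-1 by field.
have -> : 1 - (1 - z) * (y / (y - 1)) = (z * y - 1) * (y - 1)^-1 by field.
have -> : 1 - y = (-1) * (y - 1) by ring.
have -> : 1 - z * y = (-1) * (z * y - 1) by ring.
rewrite !(mcharM hX, mcharV hX, mcharM hphi, mcharV hphi) !invfM !invrK.
have Xy1 := mchar_neq0 hX y1n0; move: (X (z * y - 1))^-1 => Xzy.
have m1n0 : (-1 : F) != 0 by rewrite oppr_eq0 oner_neq0.
have /eqP := mcharN1_sqr hX; rewrite sqrf_eq1 => /orP[] /eqP ->;
  case: (qchar_pm1 m1n0) => ->; case: (qchar_pm1 y1n0) => ->;
  by field; rewrite ?Xy1 ?oppr_eq0 ?oner_eq0.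
Qed.

Lemma F21_sqr_reflect z : F21 X (cmul X phi) (cexp X 2) z = X 4%:R * F21q X (1 - z).
Proof.
pose c := cmul X phi (-1).
have cn0 : c != 0 by rewrite mulf_neq0 ?mchar_neq0 // oppr_eq0 oner_neq0.
have P21_sqrE w : P21 X (cmul X phi) (cexp X 2) w = c^-1 * P21 X (cmul X phi) phi (1 - w).
  by rewrite P21_qchar_reflect mulKf.
have denominator : Jacobi (cmul X phi) (cmul (cexp X 2) (cbar (cmul X phi)))
    = P21 X (cmul X phi) (cexp X 2) 0.
  apply: eq_bigr => y _.
  by rewrite mul0r subr0 /cbar mchar1 // invr1 mulr1 /cmul [cexp X 2 (1 - y) * _]mulrC.
rewrite /F21 denominator !P21_sqrE.
have -> : (1 - 0 : F) = 1 ^+ 2 by rewrite subr0 expr1n.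
rewrite P21_qchar_square ?oner_neq0 // F21qE subrr expr0n /= /cbar mchar0 // invr0 addr0.
have -> : ((1 + 1) ^+ 2 : F) = 4%:R by ring.
have Jn0 := Jacobi_cmul_qchar_neq0; have X4 := mchar_neq0 hX (four_neq0 two_neq0).
by field; rewrite ?Jn0 ?X4 ?cn0.
Qed.

End QuadraticPeriod.

Lemma cbar_cmul (F : finFieldType) (A B : F -> algC) u :
  cbar (cmul A B) u = cbar A u * cbar B u.
Proof. by rewrite /cbar /cmul invfM. Qed.

(* [cbar A u = cbar B u * cbar (cmul A (cbar B)) u] also at [u = 0], so both sides
   become polynomials in [cbar B] and [cbar (cmul A (cbar B))] at [u] and [v]. *)
Lemma cbar_binomial_mul (F : finFieldType) (A B : F -> algC) u v :
  mchar A -> mchar B ->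
  (cbar A u + cbar A v) * (cbar B u + cbar B v)
  = cbar (cmul A B) u + cbar (cmul A B) v
    + cbar B (u * v) * (cbar (cmul A (cbar B)) u + cbar (cmul A (cbar B)) v).
Proof.
move=> hA hB.
have cbarA_split w : cbar A w = cbar B w * cbar (cmul A (cbar B)) w.
  rewrite /cbar /cmul; have [->|wn0] := eqVneq w 0; first by rewrite !mchar0 // !(invr0, mul0r).
  have Aw := mchar_neq0 hA wn0; have Bw := mchar_neq0 hB wn0.
  by field; rewrite Aw Bw.
rewrite !(cbar_cmul A B) (mcharM (mchar_cbar hB)) (cbarA_split u) (cbarA_split v).
ring.
Qed.

Section Products.
Variable F : finFieldType.
Hypothesis two_neq0 : (2%:R : F) != 0.
Variables A B : F -> algC.
Hypotheses (hA : mchar A) (hB : mchar B).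
Hypotheses (oA : (2 < char_order A)%N) (oB : (2 < char_order B)%N).
Hypotheses (oAB : (2 < char_order (cmul A B))%N) (oAbB : (2 < char_order (cmul A (cbar B)))%N).
Let hAB := mchar_cmul hA hB.
Let hAbB := mchar_cmul hA (mchar_cbar hB).

Lemma F21q_mul z :
  F21q A z * F21q B z
  = F21q (cmul A B) z + cexp (cbar B) 2 (1 - z) * F21q (cmul A (cbar B)) z - kdelta z.
Proof.
have [->|zn0] := eqVneq z 0.
  rewrite !F21q0 // /kdelta eqxx /cexp /cbar subr0 mchar1 // invr1.
  by rewrite expr1n !mulr1 addrK.
rewrite /kdelta (negbTE zn0) subr0.
have [/existsP[s /eqP zE]|nsq_z] := boolP (is_square z); last first.
  by rewrite !F21q_nonsquare // !mulr0 addr0.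
have sn0 : s != 0 by apply: contraNneq zn0 => s0; rewrite -zE s0 expr0n.
rewrite -zE !F21q_square // /cexp -(mcharX (mchar_cbar hB)).
have -> : (1 - s ^+ 2) ^+ 2 = (1 + s) ^+ 2 * (1 - s) ^+ 2 by ring.
exact: cbar_binomial_mul.
Qed.

Lemma F21_sqr_mul z :
  F21 A (cmul A (@qchar F)) (cexp A 2) z * F21 B (cmul B (@qchar F)) (cexp B 2) z
  = F21 (cmul A B) (cmul (cmul A B) (@qchar F)) (cexp (cmul A B) 2) z
    + cexp (cbar B) 2 (z / 4%:R)
      * F21 (cmul A (cbar B)) (cmul (cmul A (cbar B)) (@qchar F)) (cexp (cmul A (cbar B)) 2) z
    - kdelta (1 - z) * cmul A B 4%:R.
Proof.
rewrite !F21_sqr_reflect // mulrACA F21q_mul // subKr /cexp /cbar /cmul mcharM // mcharV //.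
have B4 := mchar_neq0 hB (four_neq0 two_neq0).
move: (F21q (cmul A B) (1 - z)) (F21q (cmul A (cbar B)) (1 - z)) (kdelta (1 - z)) => u v k.
rewrite invfM invrK; move: (B z)^-1 => Bz.
by field; rewrite B4.
Qed.
End Products.

Theorem mainTheorem6 (F : finFieldType) (A B : F -> algC) :
  odd #|F| ->
  is_mchar A -> is_mchar B ->
  (2 < char_order A)%N -> (2 < char_order B)%N ->
  (2 < char_order (cmul A B))%N -> (2 < char_order (cmul A (cbar B)))%N ->
  forall z : F,
    F21 A (cmul A (@qchar F)) (cexp A 2) z * F21 B (cmul B (@qchar F)) (cexp B 2) z =
      F21 (cmul A B) (cmul (cmul A B) (@qchar F)) (cexp (cmul A B) 2) z
      + cexp (cbar B) 2 (z / 4%:R)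
        * F21 (cmul A (cbar B)) (cmul (cmul A (cbar B)) (@qchar F))
              (cexp (cmul A (cbar B)) 2) z
      - kdelta (1 - z) * cmul A B 4%:R
  /\
    F21 A (cmul A (@qchar F)) (@qchar F) z * F21 B (cmul B (@qchar F)) (@qchar F) z =
      F21 (cmul A B) (cmul (cmul A B) (@qchar F)) (@qchar F) z
      + cexp (cbar B) 2 (1 - z)
        * F21 (cmul A (cbar B)) (cmul (cmul A (cbar B)) (@qchar F)) (@qchar F) z
      - kdelta z.
Proof.
move=> oddF /is_mcharP hA /is_mcharP hB oA oB oAB oAbB z.
have two_neq0 := odd_card_two_neq0 oddF.
split; [exact: F21_sqr_mul | exact: F21q_mul].
Qed.
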